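(* Let $T_1$ and $T_2$ be two nontrivial trees with orders $m$ and $n$ respectively. Then $hn_{cc}(T_1\Box T_2)=m+n-1$.
   Context: All graphs are finite, simple and undirected. For a graph $G$ and $S\subseteq V(G)$, the cycle interval $\langle S\rangle$ consists of the vertices of $S$ together with every vertex $w\in V(G)\setminus S$ such that $G[S\cup\{w\}]$ contains a cycle through $w$; $S$ is cycle convex if $\langle S\rangle=S$; the cycle convex hull $\langle S\rangle_C$ is the smallest cycle convex set containing $S$; a hull set is a set $S$ with $\langle S\rangle_C=V(G)$, and $hn_{cc}(G)$ is the minimum cardinality of a hull set. The Cartesian product $G\Box H$ has vertex set $V(G)\times V(H)$, with $(g_1,h_1)\sim(g_2,h_2)$ iff ($g_1\sim g_2$ and $h_1=h_2$) or ($g_1=g_2$ and $h_1\sim h_2$). A tree is nontrivial if it has at least two vertices. *)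

From mathcomp Require Import all_boot.
Set Implicit Arguments. Unset Strict Implicit. Unset Printing Implicit Defensive.

Section Graphs.
Variables (T : finType) (e : rel T).

Definition simple_graph : Prop := symmetric e /\ irreflexive e.

Definition is_graph_cycle (c : seq T) : Prop :=
  [/\ uniq c, 3 <= size c & cycle e c].

Definition induced_cycle_through (X : {set T}) (w : T) : Prop :=
  exists c : seq T, [/\ is_graph_cycle c, w \in c & {subset c <= X}].

Definition in_cycle_interval (S : {set T}) (w : T) : Prop :=
  w \in S \/ (w \notin S /\ induced_cycle_through (S :|: [set w]) w).

Definition cycle_convex (S : {set T}) : Prop :=
  forall w, in_cycle_interval S w <-> w \in S.

(* Membership in the cycle convex hull <S>_C, the smallest cycle convex set
   containing S (= intersection of all cycle convex supersets of S). *)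
Definition in_cc_hull (S : {set T}) (x : T) : Prop :=
  forall C : {set T}, cycle_convex C -> S \subset C -> x \in C.

Definition cc_hull_set (S : {set T}) : Prop := forall x, in_cc_hull S x.

Definition cc_hull_number_is (k : nat) : Prop :=
  (exists S : {set T}, cc_hull_set S /\ #|S| = k) /\
  (forall S : {set T}, cc_hull_set S -> k <= #|S|).

Definition connected_graph : Prop := forall x y, connect e x y.
Definition acyclic_graph : Prop := forall c : seq T, ~ is_graph_cycle c.
Definition is_tree : Prop := [/\ simple_graph, connected_graph & acyclic_graph].

End Graphs.

Definition cart_prod (T1 T2 : finType) (e1 : rel T1) (e2 : rel T2) : rel (T1 * T2) :=
  fun x y => (e1 x.1 y.1 && (x.2 == y.2)) || ((x.1 == y.1) && e2 x.2 y.2).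

From mathcomp Require Import all_boot.
Set Implicit Arguments. Unset Strict Implicit. Unset Printing Implicit Defensive.

(* The cross {u0} × V(T2) ∪ V(T1) × {v0} is a hull set: a cycle convex set
   containing three corners (a,b), (a',b), (a,b') of a square of T1 □ T2 also
   contains the fourth, so convexity fills the product row by row along the trees.
   Conversely, read S as the edge set of a bipartite graph B_S on V(T1) ⊔ V(T2).
   The pairs (a,b) with a and b in one component of B_S form a cycle convex set
   containing S: if a cycle leaves it only at w = (u,v), the rest of the cycle
   either already has a vertex with first coordinate u, or it projects onto T1 to
   a walk between two distinct neighbours of u, which in a tree must pass through
   u; likewise for v.  So a hull set makes B_S connected, and a connected graph on
   m + n vertices has at least m + n - 1 edges. *)

Definition lazy_step (T : eqType) (e : rel T) : rel T :=
  [rel x y | (x == y) || e x y].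

Lemma uniq_lazy_path (T : eqType) (e : rel T) x p :
  uniq (x :: p) -> path (lazy_step e) x p -> path e x p.
Proof.
elim: p x => //= y p IHp x /andP [x_yp yp_uniq] /andP [/orP [/eqP xy|exy] yp_path].
  by move: x_yp; rewrite xy mem_head.
by rewrite exy IHp.
Qed.

Section Forest.
Variables (T : finType) (e : rel T).
Hypotheses (e_sym : symmetric e) (e_acyclic : acyclic_graph e).

Lemma lazy_walk_through u s p :
  path (lazy_step e) s p -> e u s -> e u (last s p) -> s != last s p ->
  u \in s :: p.
Proof.
move=> walk eus eut s_t; apply/negPn/negP => u_out.
case: (shortenP walk) eut s_t => p' walk' p'_uniq p'_sub eut s_t.
have u_out' : u \notin s :: p'.
  by apply: contra u_out; rewrite !inE => /orP [->|/p'_sub ->]; rewrite ?orbT.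
apply: (e_acyclic (c := u :: s :: p')); split.
- by rewrite cons_uniq u_out'.
- by case: p' {walk' p'_uniq p'_sub u_out' eut} s_t => [|? ?]; rewrite ?eqxx.
- by rewrite /= rcons_path eus uniq_lazy_path // e_sym.
Qed.

Lemma walk_meets_coord (X : eqType) (Y : eqType) (r : rel X) (f : X -> T) (g : X -> Y)
    w a p :
  (forall x y, r x y -> f x = f y \/ e (f x) (f y) /\ g x = g y) ->
  (forall x y, f x = f y -> g x = g y -> x = y) ->
  path r a p -> r w a -> r (last a p) w -> a != last a p ->
  exists2 x, x \in a :: p & f x = f w.
Proof.
move=> r_step fg_inj walk rwa rbw a_b.
suff /mapP [x x_ap fwx] : f w \in map f (a :: p) by exists x.
case: (r_step _ _ rwa) => [->|[ewa ga]]; first exact: map_f (mem_head _ _).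
case: (r_step _ _ rbw) => [<-|[ebw gb]]; first exact: map_f (mem_last _ _).
apply: lazy_walk_through; rewrite ?last_map //.
- rewrite path_map; apply: sub_path walk => x y /r_step [fxy|[exy _]] /=.
    by rewrite /lazy_step /= fxy eqxx.
  by rewrite /lazy_step /= exy orbT.
- by rewrite e_sym.
- by apply: contra a_b => /eqP fab; apply/eqP/fg_inj => //; rewrite -ga gb.
Qed.

End Forest.

Section EdgeCount.
Variables (V : finType) (B : rel V).

Definition edge_set : {set {set V}} := [set [set x; y] | x : V, y : V in B x].

Lemma card_le_edge_set r : (forall x, connect B x r) -> #|V| <= #|edge_set|.+1.
Proof.
move=> conn_r.
pose reach n x := [exists s : n.-tuple V, path B x s && (last x s == r)].
have reach_ex x : exists n, reach n x.
  case/connectP: (conn_r x) => s s_path r_last.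
  by exists (size s); apply/existsP; exists (in_tuple s); rewrite s_path -r_last eqxx.
(* [d x] is the distance from [x] to [r] and [p x] a neighbour of [x] closer to
   [r], so that [x |-> [set x; p x]] is injective off [r]. *)
pose d x := ex_minn (reach_ex x).
have d_reach x : reach (d x) x by rewrite /d; case: ex_minnP.
have d_min x n : reach n x -> d x <= n by rewrite /d; case: ex_minnP => m _; apply.
have parent_ex x : x != r -> exists y, B x y && (d y < d x).
  move=> xr; case: (d x) (d_reach x) => [|n] /existsP [s /andP [s_path /eqP s_last]].
    by move: s_last xr; rewrite tuple0 /= => ->; rewrite eqxx.
  case/tupleP: s s_path s_last => y s /= /andP [Bxy s_path] s_last.
  exists y; rewrite Bxy ltnS d_min //; apply/existsP; exists s.
  by rewrite s_path s_last eqxx.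
pose p x := odflt x [pick y | B x y && (d y < d x)].
have p_spec x : x != r -> B x (p x) && (d (p x) < d x).
  by move=> /parent_ex [y]; rewrite /p; case: pickP => [z //|/(_ y) ->].
have p_inj : {in [set~ r] &, injective (fun x => [set x; p x])}.
  move=> x y; rewrite !in_setC1 => xr yr /= xy_eq.
  have /set2P [//|x_py] : x \in [set y; p y] by rewrite -xy_eq set21.
  have /set2P [->//|y_px] : y \in [set x; p x] by rewrite xy_eq set21.
  have /andP [_] := p_spec x xr; have /andP [_] := p_spec y yr.
  by rewrite -x_py -y_px => dxy /(ltn_trans dxy); rewrite ltnn.
apply: leq_trans (leqSpred _) _; rewrite -(cardsC1 r) -(card_in_imset p_inj) ltnS.
apply/subset_leq_card/subsetP => _ /imsetP [x xr ->]; rewrite in_setC1 in xr.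
by apply/imset2P; exists x (p x); case/andP: (p_spec x xr).
Qed.

End EdgeCount.

Lemma graph_cycle_through (T : finType) (e : rel T) c w :
  is_graph_cycle e c -> w \in c ->
  exists a q, [/\ {subset a :: q <= [predD1 c & w]}, a != last a q,
                  e w a, path e a q & e (last a q) w].
Proof.
move=> [c_uniq c_size c_cycle] /rot_to [i p c_rot].
move: c_size c_uniq c_cycle; rewrite -(size_rot i) -(rot_uniq i) -(rot_cycle i) c_rot.
case: p c_rot => [|a [|y q]] // c_rot _ wc_uniq.
rewrite /cycle rcons_path => /andP [/andP [ewa aq_path] eqw].
exists a, (y :: q); split => //.
- move=> x x_aq; rewrite inE -(mem_rot i) c_rot inE x_aq orbT andbT.
  by apply: contraTneq x_aq => ->; case/andP: wc_uniq.
- case/and3P: wc_uniq => _ a_yq _.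
  by apply: contraNneq a_yq => ->; exact: (mem_last y q).
Qed.

Section CartesianProduct.
Variables (T1 T2 : finType) (e1 : rel T1) (e2 : rel T2).
Local Notation G := (cart_prod e1 e2).
Hypotheses (e1_sym : symmetric e1) (e2_sym : symmetric e2).

Lemma cart_prod_fst x y : G x y -> x.1 = y.1 \/ e1 x.1 y.1 /\ x.2 = y.2.
Proof. by case/orP => /andP [] => [? /eqP ? | /eqP ? _]; [right | left]. Qed.

Lemma cart_prod_snd x y : G x y -> x.2 = y.2 \/ e2 x.2 y.2 /\ x.1 = y.1.
Proof. by case/orP => /andP [] => [_ /eqP ? | /eqP ? ?]; [left | right]. Qed.

Lemma pair_inj (x y : T1 * T2) : x.1 = y.1 -> x.2 = y.2 -> x = y.
Proof. by case: x y => ? ? [? ?] /= -> ->. Qed.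

Section Incidence.
Variable S : {set T1 * T2}.

Definition incidence : rel (T1 + T2) := fun x y =>
  match x, y with
  | inl a, inr b | inr b, inl a => (a, b) \in S
  | _, _ => false
  end.

Lemma incidence_sym : symmetric incidence.
Proof. by case=> [a|b] [c|d]. Qed.

Definition linked : {set T1 * T2} :=
  [set x | connect incidence (inl x.1) (inr x.2)].

Lemma sub_linked : S \subset linked.
Proof. by apply/subsetP => -[a b] ab; rewrite inE connect1. Qed.

Lemma linked_step x y : x \in linked -> y \in linked -> G x y ->
  connect incidence (inl x.1) (inl y.1).
Proof.
rewrite !inE => x_linked y_linked /cart_prod_fst [->|[_ xy2]]; first exact: connect0.
apply: connect_trans x_linked _.
by rewrite xy2 (sym_connect_sym incidence_sym).
Qed.

Lemma linked_path a q : path G a q -> {subset a :: q <= linked} ->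
  {in a :: q, forall x, connect incidence (inl a.1) (inl x.1)}.
Proof.
elim: q a => [|y q IHq] a /=.
  by move=> _ _ x /[!inE] /eqP ->; exact: connect0.
move=> /andP [Gay yq_path] aq_linked x /[!inE] /orP [/eqP ->|x_yq].
  exact: connect0.
have yq_linked : {subset y :: q <= linked}.
  by move=> z z_yq; apply: aq_linked; rewrite inE z_yq orbT.
apply: connect_trans (IHq y yq_path yq_linked x x_yq).
by apply: linked_step Gay; apply: aq_linked; rewrite !inE eqxx ?orbT.
Qed.

Lemma linked_path_connect a q : path G a q -> {subset a :: q <= linked} ->
  {in a :: q &, forall x y, connect incidence (inl x.1) (inr y.2)}.
Proof.
move=> aq_path aq_linked x y x_aq y_aq.
have conn_a := linked_path aq_path aq_linked.
apply: connect_trans (_ : connect _ _ (inl a.1)) _.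
  by rewrite (sym_connect_sym incidence_sym) conn_a.
apply: connect_trans (conn_a y y_aq) _.
by have := aq_linked y y_aq; rewrite inE.
Qed.

Lemma card_edge_set_incidence : #|edge_set incidence| <= #|S|.
Proof.
apply: leq_trans (leq_imset_card (fun x => [set inl x.1; inr x.2]) S).
apply/subset_leq_card/subsetP => _ /imset2P [[a|b] [c|d] _ //= xy ->].
  by apply/imsetP; exists (a, d).
by apply/imsetP; exists (c, b); rewrite //= setUC.
Qed.

Hypotheses (e1_acyclic : acyclic_graph e1) (e2_acyclic : acyclic_graph e2).

Lemma linked_cycle_convex : cycle_convex G linked.
Proof.
move=> w; split=> [[//|[_ [c [c_cycle w_c c_sub]]]]|]; last by left.
have [a [q [aq_sub a_b Gwa aq_path Gbw]]] := graph_cycle_through c_cycle w_c.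
have aq_linked : {subset a :: q <= linked}.
  by move=> x /aq_sub /andP [x_w /c_sub]; rewrite !inE (negbTE x_w) orbF.
have [x x_aq xw] := walk_meets_coord e1_sym e1_acyclic (@cart_prod_fst)
  pair_inj aq_path Gwa Gbw a_b.
have [y y_aq yw] := walk_meets_coord e2_sym e2_acyclic (@cart_prod_snd)
  (fun x y h2 h1 => pair_inj h1 h2) aq_path Gwa Gbw a_b.
by rewrite inE -xw -yw (linked_path_connect aq_path aq_linked x_aq y_aq).
Qed.

Lemma hull_set_card_ge (x0 : T1 * T2) : cc_hull_set G S -> #|T1| + #|T2| <= #|S|.+1.
Proof.
move=> S_hull.
have linked_conn a b : connect incidence (inl a) (inr b).
  by have := S_hull (a, b) _ linked_cycle_convex sub_linked; rewrite inE.
have conn x : connect incidence x (inr x0.2).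
  case: x => [a|b]; first exact: linked_conn.
  apply: connect_trans (linked_conn x0.1 x0.2).
  by rewrite (sym_connect_sym incidence_sym).
rewrite -card_sum; apply: leq_trans (card_le_edge_set conn) _.
by rewrite ltnS card_edge_set_incidence.
Qed.

End Incidence.

Section Cross.
Hypotheses (e1_irr : irreflexive e1) (e2_irr : irreflexive e2).

Lemma cycle_convex_square C a a' b b' : cycle_convex G C ->
  e1 a a' -> e2 b b' -> (a, b) \in C -> (a', b) \in C -> (a, b') \in C ->
  (a', b') \in C.
Proof.
move=> C_convex ea eb ab a'b ab'; apply/(C_convex (a', b')).1.
case: (boolP ((a', b') \in C)) => a'b'; [by left | right; split => //].
have a_a' : (a == a') = false by apply: contraTF ea => /eqP ->; rewrite e1_irr.
have b_b' : (b == b') = false by apply: contraTF eb => /eqP ->; rewrite e2_irr.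
exists [:: (a, b); (a', b); (a', b'); (a, b')]; split.
- split => //.
  + by rewrite /= !inE !xpair_eqE a_a' b_b' eq_sym a_a' !andbF.
  + by rewrite /= /cart_prod /= (e1_sym a') (e2_sym b') ea eb !eqxx ?orbT.
- by rewrite !inE eqxx !orbT.
- by move=> x /[!inE] /or4P [] /eqP ->; rewrite ?ab ?a'b ?ab' ?eqxx ?orbT.
Qed.

Definition cross (u0 : T1) (v0 : T2) : {set T1 * T2} :=
  setX [set u0] setT :|: setX setT [set v0].

Lemma card_cross u0 v0 : #|cross u0 v0| = #|T1| + #|T2| - 1.
Proof.
have cross_meet : setX [set u0] setT :&: setX setT [set v0] = [set (u0, v0)].
  by apply/setP => -[a b]; rewrite !inE xpair_eqE andbT.
have := cardsUI (setX [set u0] [set: T2]) (setX [set: T1] [set v0]).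
rewrite cross_meet !cardsX !cards1 !cardsT mul1n muln1 [#|T1| + _]addnC.
by move=> <-; rewrite addnK.
Qed.

Lemma cross_hull_set u0 v0 :
  connected_graph e1 -> connected_graph e2 -> cc_hull_set G (cross u0 v0).
Proof.
move=> e1_conn e2_conn [a b] C C_convex /subsetP cross_C.
have col a' : (a', v0) \in C by apply: cross_C; rewrite /cross !inE eqxx orbT.
pose full_row := [pred a' | [forall b', (a', b') \in C]].
have full_row_closed : closed e1 full_row.
  apply: (intro_closed (sym_connect_sym e1_sym)) => a1 a2 ea /forallP row1.
  have row2_closed : closed e2 [pred b' | (a2, b') \in C].
    apply: (intro_closed (sym_connect_sym e2_sym)) => b1 b2 eb a2b1.
    exact: cycle_convex_square C_convex ea eb (row1 b1) a2b1 (row1 b2).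
  apply/forallP => b'.
  by have := closed_connect row2_closed (e2_conn v0 b'); rewrite !inE col => <-.
have : u0 \in full_row by apply/forallP => b'; apply: cross_C; rewrite /cross !inE eqxx.
by rewrite (closed_connect full_row_closed (e1_conn u0 a)) => /forallP.
Qed.

End Cross.
End CartesianProduct.

Theorem mainTheorem11 (T1 T2 : finType) (e1 : rel T1) (e2 : rel T2) :
  is_tree e1 -> is_tree e2 -> 1 < #|T1| -> 1 < #|T2| ->
  cc_hull_number_is (cart_prod e1 e2) (#|T1| + #|T2| - 1).
Proof.
move=> [[e1_sym e1_irr] e1_conn e1_acyclic] [[e2_sym e2_irr] e2_conn e2_acyclic].
move=> /ltnW /card_gt0P [u0 _] /ltnW /card_gt0P [v0 _].
split.
- exists (cross u0 v0); split; first exact: cross_hull_set.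
  exact: card_cross.
- move=> S /(hull_set_card_ge e1_sym e2_sym e1_acyclic e2_acyclic (u0, v0)).
  by rewrite leq_subLR add1n.
Qed.
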